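(* Let $\lambda=(\lambda_1,\dots,\lambda_r)$ be a partition of $n$ with conjugate $\lambda'=(\lambda'_1,\dots,\lambda'_{r'})$. Then $h_{2,1}(\lambda)$ is the largest index $j$ such that $x_j$ occurs in a monomial with non-zero coefficient of $q_{[\lambda_2,\dots,\lambda_r]}$, and $h_{1,2}(\lambda)$ is the largest index $j$ such that $x_j$ occurs in a monomial with non-zero coefficient of $q_{[\lambda'_2,\dots,\lambda'_{r'}]}$ (whenever these hook lengths are positive).
   Context: For a partition $\lambda$ and a cell $(x,y)$ of its Young diagram (row $x$, column $y$), $h_{x,y}(\lambda)$ denotes the hook length at $(x,y)$ (cells to the right in the row, plus cells below in the column, plus one); it is $0$ if $(x,y)$ is not a cell. For a partition $\mu$ of $m$, the character polynomial is $q_\mu(x_1,\dots,x_m)=\downarrow\Big(\sum_{\alpha\vdash m}\frac{\chi_\mu(\alpha)}{z_\alpha}\prod_{k=1}^m (k x_k-1)^{a_k}\Big)$, where $\alpha=(1^{a_1},\dots,m^{a_m})$ ranges over cycle types of $S_m$, $\chi_\mu$ is the irreducible character of $S_m$ indexed by $\mu$, $z_\alpha=\prod_k a_k!\,k^{a_k}$, and $\downarrow$ is the linear map sending $x_1^{c_1}\cdots x_m^{c_m}$ to $(x_1)_{c_1}\cdots(x_m)_{c_m}$ (falling factorials). One has $\chi_\lambda(\alpha)=q_{[\lambda_2,\dots,\lambda_r]}(a_1,\dots,a_{n-\lambda_1})$. *)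

From HB Require Import structures.
From mathcomp Require Import all_boot all_order all_algebra all_fingroup.
Set Implicit Arguments. Unset Strict Implicit. Unset Printing Implicit Defensive.
Import Order.TTheory GRing.Theory Num.Theory.
Local Open Scope ring_scope.

Definition is_partition (la : seq nat) : bool :=
  sorted geq la && all (fun x => (0 < x)%N) la.

Definition conj_part (la : seq nat) (y : nat) : nat := count (fun a => (y <= a)%N) la.

Definition conj_partition (la : seq nat) : seq nat :=
  mkseq (fun j => conj_part la j.+1) (head 0%N la).

(* lambda_x (1-indexed), 0 if x > length *)
Definition part (la : seq nat) (x : nat) : nat := nth 0%N la x.-1.

(* hook length h_{x,y}(lambda); 0 if (x,y) is not a cell *)
Definition hook (la : seq nat) (x y : nat) : nat :=
  if [&& (1 <= x)%N, (1 <= y)%N & (y <= part la x)%N]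
  then ((part la x - y) + (conj_part la y - x) + 1)%N
  else 0%N.

(* chi_mu(alpha), alpha given as a list of cycle lengths, via
   chi_mu(alpha) = <s_mu, p_alpha>, s_mu = det (h_{mu_i - i + j}) (Jacobi-Trudi),
   <prod_i h_{nu_i}, p_alpha> = #{f : parts of alpha -> rows | row sums = nu}. *)
Definition chi (mu alpha : seq nat) : int :=
  \sum_(s : 'S_(size mu))
    (-1) ^+ (odd_perm s) *
    (#|[set f : {ffun 'I_(size alpha) -> 'I_(size mu)} |
        [forall i : 'I_(size mu),
           ((\sum_(t : 'I_(size alpha) | f t == i) nth 0%N alpha t)%N%:Z
              == (nth 0%N mu i)%:Z - (i : nat)%:Z + (s i : nat)%:Z)]]|)%:Z.

(* A polynomial is a formal finite sum of terms (coefficient, exponent vector);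
   the exponent vector e : 'I_m -> nat, e k is the exponent of x_{k+1}. *)
Definition expo (m : nat) := {ffun 'I_m -> nat}.
Definition mpoly (m : nat) := seq (rat * expo m).

Definition mpoly_const m (a : rat) : mpoly m := [:: (a, [ffun => 0%N])].
Definition mpoly_var m (k : 'I_m) : mpoly m :=
  [:: (1, [ffun i => nat_of_bool (i == k)])].
Definition mpoly_add m (p q : mpoly m) : mpoly m := p ++ q.
Definition mpoly_scale m (a : rat) (p : mpoly m) : mpoly m :=
  [seq (a * t.1, t.2) | t : rat * expo m <- p].
Definition mpoly_mul m (p q : mpoly m) : mpoly m :=
  [seq (t.1 * u.1, [ffun i => (t.2 i + u.2 i)%N] : expo m) | t : rat * expo m <- p, u : rat * expo m <- q].
Definition mpoly_sum m (ps : seq (mpoly m)) : mpoly m := flatten ps.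
Definition mpoly_prod m (ps : seq (mpoly m)) : mpoly m :=
  foldr (@mpoly_mul m) (mpoly_const m 1) ps.
Definition mpoly_pow m (p : mpoly m) (n : nat) : mpoly m := mpoly_prod (nseq n p).

Definition mpoly_coef m (p : mpoly m) (e : expo m) : rat :=
  \sum_(t <- p | t.2 == e) t.1.

Definition falling_var m (k : 'I_m) (c : nat) : mpoly m :=
  mpoly_prod [seq mpoly_add (mpoly_var k) (mpoly_const m (- (i%:R))) | i <- iota 0 c].

Definition falling m (p : mpoly m) : mpoly m :=
  mpoly_sum [seq mpoly_scale t.1 (mpoly_prod [seq falling_var k (t.2 k) | k : 'I_m <- enum 'I_m])
            | t : rat * expo m <- p].

Definition occurs m (p : mpoly m) (j : nat) : Prop :=
  exists (e : expo m) (i : 'I_m), [/\ (i.+1 = j)%N, (0 < e i)%N & mpoly_coef p e != 0].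

(* cycle types of S_m: a k = a_{k+1}, with sum_k (k+1) a_{k+1} = m *)
Definition cycle_type m (a : {ffun 'I_m -> 'I_m.+1}) : bool :=
  (\sum_(k < m) k.+1 * a k)%N == m.

Definition ct_parts m (a : {ffun 'I_m -> 'I_m.+1}) : seq nat :=
  flatten [seq nseq (a k) k.+1 | k : 'I_m <- enum 'I_m].

Definition zee m (a : {ffun 'I_m -> 'I_m.+1}) : nat :=
  (\prod_(k < m) ((a k)`! * k.+1 ^ (a k)))%N.

Definition charpoly (mu : seq nat) : mpoly (sumn mu) :=
  falling
    (mpoly_sum
       [seq mpoly_scale ((chi mu (ct_parts a))%:~R / (zee a)%:R)
            (mpoly_prod [seq mpoly_pow
                               (mpoly_add (mpoly_scale (k.+1)%:R (mpoly_var k))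
                                          (mpoly_const (sumn mu) (-1)))
                               (a k)
                        | k : 'I_(sumn mu) <- enum 'I_(sumn mu)])
       | a : {ffun 'I_(sumn mu) -> 'I_(sumn mu).+1} <- enum (@cycle_type (sumn mu))]).

From mathcomp Require Import all_boot all_order all_algebra all_fingroup.
From mathcomp Require Import zify.
Set Implicit Arguments. Unset Strict Implicit. Unset Printing Implicit Defensive.
Import Order.TTheory GRing.Theory Num.Theory.

(* Let b_i = mu_(i+1) + l - 1 - i (0 <= i < l) be the first-column hook lengths of a
   partition mu of length l.  For mu = (lambda_2, ...), resp. mu = (lambda'_2, ...),
   b_0 = h_(1,1)(mu) is h_(2,1)(lambda), resp. h_(1,2)(lambda), so the claim is that
   b_0 is the largest index of a variable occurring in q_mu.
   By Jacobi-Trudi, chi_mu(alpha) is a signed count of pairs (s, f) where f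
   distributes the parts of alpha over the rows so that row i receives b_i - (l-1-s i).
   A part larger than b_0 fits in no row, so chi_mu(alpha) = 0 for such alpha; as the
   falling-factorial map introduces no new variable, no x_j with j > b_0 occurs.
   Conversely, the falling-factorial map is unitriangular for the componentwise order
   on exponents and distinct cycle types have incomparable exponents, so the
   coefficient of x^a in q_mu is chi_mu(alpha) z_alpha^-1 prod_k k^(a_k) for every
   cycle type alpha = (1^a_1, 2^a_2, ...).  Matching the b_i >= l, in order, with the
   gaps left in {0, ..., l-1} by the b_i < l yields a cycle type with distinct parts,
   one of them b_0, for which a single permutation s admits a distribution f; hence
   its character value is nonzero and x_(b_0) occurs. *)

Section Coefficients.
Local Open Scope ring_scope.
Variable m : nat.
Implicit Types (p q : mpoly m) (e A B : expo m).

Lemma mpoly_coef_cat p q e : mpoly_coef (p ++ q) e = mpoly_coef p e + mpoly_coef q e.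
Proof. by rewrite /mpoly_coef big_cat. Qed.

Lemma mpoly_coef_flatten (ps : seq (mpoly m)) e :
  mpoly_coef (flatten ps) e = \sum_(p <- ps) mpoly_coef p e.
Proof.
elim: ps => [|p ps IH]; first by rewrite big_nil /mpoly_coef big_nil.
by rewrite /= mpoly_coef_cat IH big_cons.
Qed.

Lemma mpoly_coef_scale a p e : mpoly_coef (mpoly_scale a p) e = a * mpoly_coef p e.
Proof. by rewrite /mpoly_coef /mpoly_scale big_map mulr_sumr. Qed.

Lemma mpoly_coef_neq0 p e :
  mpoly_coef p e != 0 -> exists2 t, t \in p & t.2 = e /\ t.1 != 0.
Proof.
move=> pe0; have [/hasP[t tp /andP[/eqP te tn]]|/hasPn p0] :=
  boolP (has (fun t : rat * expo m => (t.2 == e) && (t.1 != 0)) p); first by exists t.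
move: pe0; rewrite /mpoly_coef big_seq_cond big1 ?eqxx // => t /andP[tp te].
by have := p0 t tp; rewrite te /= negbK => /eqP.
Qed.

Definition expo_le A B := [forall i, (A i <= B i)%N].
Definition expo_add A B : expo m := [ffun i => (A i + B i)%N].

Lemma expo_le_trans : transitive expo_le.
Proof.
move=> B A C /forallP AB /forallP BC; apply/forallP => i; exact: leq_trans (AB i) (BC i).
Qed.

Lemma expo_le_anti A B : expo_le A B -> expo_le B A -> A = B.
Proof.
by move=> /forallP AB /forallP BA; apply/ffunP => i; apply/eqP; rewrite eqn_leq AB BA.
Qed.

Lemma expo_le_add A A' B B' :
  expo_le A A' -> expo_le B B' -> expo_le (expo_add A B) (expo_add A' B').
Proof.
by move=> /forallP hA /forallP hB; apply/forallP => i; rewrite !ffunE leq_add.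
Qed.

Lemma eq_expo_add A A' B B' : expo_le A A' -> expo_le B B' ->
  (expo_add A B == expo_add A' B') = (A == A') && (B == B').
Proof.
move=> /forallP hA /forallP hB; apply/eqP/andP => [/ffunP eAB|[/eqP-> /eqP->]] //.
split; apply/eqP/ffunP => i; move: (eAB i) (hA i) (hB i); rewrite !ffunE;
  by move: (A i) (A' i) (B i) (B' i) => x x' y y'; lia.
Qed.

Definition lead_term p B (c : rat) :=
  all (fun t => expo_le t.2 B) p /\ mpoly_coef p B = c.

Lemma mpoly_coef_out p B c e : lead_term p B c -> ~~ expo_le e B -> mpoly_coef p e = 0.
Proof.
move=> [/allP pB _] eB; rewrite /mpoly_coef big_seq_cond big1 // => t /andP[/pB tB /eqP te].
by move: eB; rewrite -te tB.
Qed.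

Lemma lead_term_mul p q A B a b :
  lead_term p A a -> lead_term q B b -> lead_term (mpoly_mul p q) (expo_add A B) (a * b).
Proof.
move=> [+ <-] [/allP qB <-]; elim: p => [|t p IH] /=.
  by move=> _; split => //; rewrite /mpoly_coef !big_nil mul0r.
move=> /andP[tA /IH[pqB pqC]].
have tuE u : u \in q -> ([ffun i => (t.2 i + u.2 i)%N] == expo_add A B) = (t.2 == A) && (u.2 == B).
  by move=> uq; rewrite -eq_expo_add ?qB.
split.
  rewrite all_cat pqB andbT; apply/allP => _ /mapP[u uq ->].
  by apply: expo_le_add => //; exact: qB.
rewrite mpoly_coef_cat pqC /mpoly_coef big_cons big_map /=.
have [tA'|ntA] := eqVneq t.2 A; last first.
  rewrite big_seq_cond big1 ?add0r // => u /andP[uq].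
  by rewrite tuE // (negbTE ntA).
rewrite mulrDl; congr (_ + _); rewrite mulr_sumr big_seq_cond [RHS]big_seq_cond.
by apply: eq_bigl => u; case uq: (u \in q); rewrite //= tuE // tA' eqxx.
Qed.

Lemma lead_term_cat p q B c d :
  lead_term p B c -> lead_term q B d -> lead_term (mpoly_add p q) B (c + d).
Proof. by move=> [pB <-] [qB <-]; split; rewrite ?all_cat ?pB // mpoly_coef_cat. Qed.

Lemma lead_term_scale a p B c : lead_term p B c -> lead_term (mpoly_scale a p) B (a * c).
Proof.
by move=> [/allP pB <-]; split; [apply/allP => _ /mapP[t /pB ? ->] | rewrite mpoly_coef_scale].
Qed.

Definition expo_var (k : 'I_m) : expo m := [ffun i => nat_of_bool (i == k)].

Lemma lead_term_var k : lead_term (mpoly_var k) (expo_var k) 1.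
Proof.
split; first by rewrite /= andbT; apply/forallP => i.
by rewrite /mpoly_coef big_cons big_nil eqxx addr0.
Qed.

Lemma lead_term_const_var b k : lead_term (mpoly_const m b) (expo_var k) 0.
Proof.
split; first by rewrite /= andbT; apply/forallP => i; rewrite ffunE.
have ne : [ffun => 0%N] != expo_var k by apply/eqP => /ffunP/(_ k); rewrite !ffunE eqxx.
by rewrite /mpoly_coef big_cons big_nil /= (negbTE ne).
Qed.

Lemma lead_term_prod (X : Type) (s : seq X) (P : X -> mpoly m) (B : X -> expo m) (c : X -> rat) :
  (forall x, lead_term (P x) (B x) (c x)) ->
  lead_term (mpoly_prod (map P s)) [ffun i => \sum_(x <- s) B x i]%N (\prod_(x <- s) c x).
Proof.
move=> PB; elim: s => [|x s IH] /=.
  have -> : [ffun i => \sum_(x <- [::]) B x i]%N = [ffun => 0%N] :> expo m.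
    by apply/ffunP => i; rewrite !ffunE big_nil.
  split; first by rewrite /= andbT; apply/forallP => i.
  by rewrite big_nil /mpoly_coef big_cons big_nil eqxx addr0.
have -> : [ffun i => \sum_(y <- x :: s) B y i]%N = expo_add (B x) [ffun i => \sum_(y <- s) B y i]%N.
  by apply/ffunP => i; rewrite !ffunE big_cons.
rewrite big_cons; exact: lead_term_mul.
Qed.

Lemma lead_term_pow p B c n :
  lead_term p B c -> lead_term (mpoly_pow p n) [ffun i => n * B i]%N (c ^+ n).
Proof.
move=> pB; have := lead_term_prod (nseq n tt) (fun=> pB).
have -> : [ffun i => \sum_(x <- nseq n tt) B i]%N = [ffun i => n * B i]%N :> expo m.
  by apply/ffunP => i; rewrite !ffunE big_nseq iter_addn_0 mulnC.
by rewrite map_nseq big_nseq iter_mulr_1.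
Qed.

Lemma sum_enum_delta (f : 'I_m -> nat) i : (\sum_(k <- enum 'I_m) f k * (i == k))%N = f i.
Proof.
rewrite big_enum /= (bigD1 i) //= eqxx muln1 big1 ?addn0 // => k.
by rewrite eq_sym => /negbTE->; rewrite muln0.
Qed.

Lemma lead_term_falling_var k c :
  lead_term (falling_var k c) [ffun i => c * (i == k)]%N 1.
Proof.
have := lead_term_prod (iota 0 c)
  (fun i => lead_term_cat (lead_term_var k) (lead_term_const_var (- i%:R) k)).
rewrite addr0 big1 // -/(falling_var k c).
have -> // : [ffun i => \sum_(x <- iota 0 c) expo_var k i]%N = [ffun i => c * (i == k)]%N.
by apply/ffunP => i; rewrite !ffunE big_const_seq count_predT size_iota iter_addn_0 mulnC.
Qed.

Definition falling_monomial e : mpoly m :=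
  mpoly_prod [seq falling_var k (e k) | k <- enum 'I_m].

Lemma lead_term_falling_monomial e : lead_term (falling_monomial e) e 1.
Proof.
have := lead_term_prod (enum 'I_m) (fun k => lead_term_falling_var k (e k)).
have -> // : [ffun i => \sum_(k <- enum 'I_m) [ffun i => e k * (i == k)] i]%N = e.
  by apply/ffunP => i; rewrite ffunE -[RHS](sum_enum_delta e); apply: eq_bigr => k _; rewrite ffunE.
by rewrite big1.
Qed.
End Coefficients.

Section CycleTypeCoefficients.
Local Open Scope ring_scope.
Variable m : nat.
Implicit Types (a : {ffun 'I_m -> 'I_m.+1}) (w : {ffun 'I_m -> 'I_m.+1} -> rat).

Definition power_product a : mpoly m :=
  mpoly_prod [seq mpoly_pow (mpoly_add (mpoly_scale k.+1%:R (mpoly_var k)) (mpoly_const m (-1))) (a k)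
             | k : 'I_m <- enum 'I_m].

Definition ct_expo a : expo m := [ffun k => nat_of_ord (a k)].

Definition ct_combination w : mpoly m :=
  mpoly_sum [seq mpoly_scale (w a) (power_product a) | a <- enum (@cycle_type m)].

Lemma lead_term_power_product a :
  lead_term (power_product a) (ct_expo a) (\prod_(k < m) k.+1%:R ^+ a k).
Proof.
have := lead_term_prod (enum 'I_m) (fun k => lead_term_pow (a k)
  (lead_term_cat (lead_term_scale k.+1%:R (lead_term_var k)) (lead_term_const_var (-1) k))).
have -> : [ffun i => \sum_(k <- enum 'I_m) [ffun i => a k * expo_var k i] i]%N = ct_expo a.
  apply/ffunP => i; rewrite !ffunE -[RHS](sum_enum_delta (fun k => nat_of_ord (a k))).
  by apply: eq_bigr => k _; rewrite !ffunE.
by rewrite big_enum /=; under eq_bigr do rewrite mulr1 addr0.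
Qed.

Lemma cycle_type_expo_le a a' :
  cycle_type a -> cycle_type a' -> expo_le (ct_expo a) (ct_expo a') -> a = a'.
Proof.
move=> /eqP ha /eqP ha' /forallP aa'.
have le_aa' (k : 'I_m) : (k.+1 * a k <= k.+1 * a' k)%N.
  by rewrite leq_pmul2l //; move: (aa' k); rewrite !ffunE.
have : (\sum_(k < m) (k.+1 * a' k - k.+1 * a k) == 0)%N by rewrite sumnB ?ha ?ha' ?subnn.
rewrite sum_nat_eq0 => /forallP eq_aa'; apply/ffunP => k; apply/val_inj/eqP.
have := eq_aa' k; rewrite /= subn_eq0 => ge_aa'.
by rewrite -(eqn_pmul2l (ltn0Sn k)) eqn_leq le_aa' ge_aa'.
Qed.

Lemma mpoly_coef_falling (P : mpoly m) e :
  mpoly_coef (falling P) e = \sum_(t <- P) t.1 * mpoly_coef (falling_monomial t.2) e.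
Proof.
rewrite /falling /mpoly_sum mpoly_coef_flatten big_map.
by apply: eq_bigr => t _; rewrite mpoly_coef_scale.
Qed.

(* [falling] is unitriangular for the componentwise order on exponents, and the
   exponents of two distinct cycle types are incomparable. *)
Lemma coef_falling_ct_combination w a : cycle_type a ->
  mpoly_coef (falling (ct_combination w)) (ct_expo a) = w a * \prod_(k < m) k.+1%:R ^+ a k.
Proof.
move=> cta; rewrite mpoly_coef_falling.
have below_ct t : t \in ct_combination w -> exists2 b, cycle_type b & expo_le t.2 (ct_expo b).
  move=> /flattenP[q /mapP[b]]; rewrite mem_enum => ctb -> /mapP[u uQ ->].
  by exists b => //=; have [/allP/(_ u uQ)] := lead_term_power_product b.
rewrite (eq_big_seq (fun t => if t.2 == ct_expo a then t.1 else 0)); last first.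
  move=> t tP; have [->|ne] := eqVneq t.2 (ct_expo a).
    by rewrite (lead_term_falling_monomial _).2 mulr1.
  rewrite (mpoly_coef_out (lead_term_falling_monomial t.2)) ?mulr0 //; apply/negP => le_ta.
  have [b ctb le_tb] := below_ct t tP; have ab : a = b.
    by apply: cycle_type_expo_le => //; exact: expo_le_trans le_tb.
  by move/eqP: ne; apply; apply: expo_le_anti => //; rewrite ab.
rewrite -big_mkcond /= -/(mpoly_coef _ _) /ct_combination /mpoly_sum mpoly_coef_flatten big_map.
rewrite (bigD1_seq a) ?enum_uniq ?mem_enum //= mpoly_coef_scale (lead_term_power_product a).2.
rewrite [X in _ + X]big1_seq ?addr0 // => b /andP[ne]; rewrite mem_enum => ctb.
rewrite mpoly_coef_scale (mpoly_coef_out (lead_term_power_product b)) ?mulr0 //.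
by apply/negP => /(cycle_type_expo_le cta ctb) ab; rewrite ab eqxx in ne.
Qed.
End CycleTypeCoefficients.

Lemma ct_parts_bool m (a : {ffun 'I_m -> 'I_m.+1}) (P : pred 'I_m) :
  (forall k, a k = P k :> nat) -> ct_parts a = [seq k.+1 | k : 'I_m <- enum 'I_m & P k].
Proof. by move=> aP; rewrite /ct_parts; elim: (enum 'I_m) => //= k s ->; rewrite aP; case: (P k). Qed.

Lemma mem_ct_parts m (a : {ffun 'I_m -> 'I_m.+1}) (k : 'I_m) : 0 < a k -> k.+1 \in ct_parts a.
Proof.
move=> ak; apply/flattenP; exists (nseq (a k) k.+1); last by rewrite mem_nseq ak eqxx.
by apply/mapP; exists k; rewrite ?mem_enum.
Qed.

Section VariablesBelow.
Local Open Scope ring_scope.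
Variables m h : nat.
Implicit Types p q : mpoly m.

(* Variable [i : 'I_m] stands for x_(i+1), so only x_1, ..., x_h occur in [p]. *)
Definition vars_below p :=
  all (fun t : rat * expo m => (t.1 == 0) || [forall i : 'I_m, (h <= i)%N ==> (t.2 i == 0%N)]) p.

Lemma occurs_vars_below p j : vars_below p -> occurs p j -> (j <= h)%N.
Proof.
move=> /allP ph [e [i [<- ei0 /mpoly_coef_neq0[t tp [te tn]]]]].
move: (ph t tp); rewrite (negbTE tn) => /forallP/(_ i).
by rewrite te; case: leqP => //= _ /eqP ei; rewrite ei in ei0.
Qed.

Lemma vars_below_cat p q : vars_below p -> vars_below q -> vars_below (mpoly_add p q).
Proof. by rewrite /vars_below all_cat => -> ->. Qed.

Lemma vars_below_flatten (ps : seq (mpoly m)) : all vars_below ps -> vars_below (flatten ps).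
Proof. by elim: ps => //= p ps IH /andP[pv /IH]; apply: vars_below_cat. Qed.

Lemma vars_below_scale a p : vars_below p -> vars_below (mpoly_scale a p).
Proof.
move=> /allP ph; apply/allP => _ /mapP[t tp ->] /=; rewrite mulf_eq0.
by case/orP: (ph t tp) => ->; rewrite ?orbT.
Qed.

Lemma vars_below_scale0 p : vars_below (mpoly_scale 0 p).
Proof. by apply/allP => _ /mapP[t _ ->]; rewrite /= mul0r eqxx. Qed.

Lemma vars_below_var (k : 'I_m) : (k < h)%N -> vars_below (mpoly_var k).
Proof.
move=> kh; rewrite /vars_below /= andbT.
apply/forallP => i; apply/implyP => hi; rewrite ffunE eqb0.
by apply: contraTneq hi => ->; rewrite -ltnNge.
Qed.

Lemma vars_below_const a : vars_below (mpoly_const m a).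
Proof. by rewrite /vars_below /= andbT; apply/orP; right; apply/forallP => i; rewrite ffunE implybT. Qed.

Lemma vars_below_mul p q : vars_below p -> vars_below q -> vars_below (mpoly_mul p q).
Proof.
move=> + /allP qh; elim: p => //= t p IH /andP[th /IH pqh]; apply: vars_below_cat pqh.
apply/allP => _ /mapP[u uq ->] /=; rewrite mulf_eq0.
case/orP: th => [->//|/forallP th]; case/orP: (qh u uq) => [->|/forallP uh]; rewrite ?orbT //.
apply/orP; right; apply/forallP => i; apply/implyP => hi; rewrite ffunE.
by rewrite (eqP (implyP (th i) hi)) (eqP (implyP (uh i) hi)).
Qed.

Lemma vars_below_prod (ps : seq (mpoly m)) : all vars_below ps -> vars_below (mpoly_prod ps).
Proof.
elim: ps => [|p ps IH] /=; first by move=> _; exact: (vars_below_const 1).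
by move=> /andP[pv /IH]; apply: vars_below_mul.
Qed.

Lemma vars_below_pow p n : vars_below p -> vars_below (mpoly_pow p n).
Proof. by move=> ph; apply: vars_below_prod; apply/allP => _ /nseqP[->]. Qed.

Lemma vars_below_falling_monomial (e : expo m) :
  (forall i : 'I_m, (h <= i)%N -> e i = 0%N) -> vars_below (falling_monomial e).
Proof.
move=> eh; apply: vars_below_prod; apply/allP => _ /mapP[k _ ->].
have [kh|hk] := ltnP k h; last by rewrite eh //; apply: vars_below_const.
apply: vars_below_prod; apply/allP => _ /mapP[i _ ->].
by apply: vars_below_cat; [apply: vars_below_var | apply: vars_below_const].
Qed.

Lemma vars_below_falling p : vars_below p -> vars_below (falling p).
Proof.
move=> /allP ph; apply: vars_below_flatten; apply/allP => _ /mapP[t tp ->].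
case/orP: (ph t tp) => [/eqP-> | /forallP th]; first exact: vars_below_scale0.
by apply/vars_below_scale/vars_below_falling_monomial => i hi; apply/eqP/(implyP (th i)).
Qed.

Lemma vars_below_ct_combination (w : {ffun 'I_m -> 'I_m.+1} -> rat) :
  (forall a, cycle_type a -> forall k : 'I_m, (h <= k)%N -> (0 < a k)%N -> w a = 0) ->
  vars_below (ct_combination w).
Proof.
move=> w0; apply: vars_below_flatten; apply/allP => q /mapP[a]; rewrite mem_enum => cta ->.
have [/existsP[k /andP[hk ak]]|] := boolP [exists k : 'I_m, (h <= k)%N && (0 < a k)%N].
  by rewrite (w0 a cta k hk ak); apply: vars_below_scale0.
rewrite negb_exists => /forallP a0; apply/vars_below_scale/vars_below_prod.
apply/allP => _ /mapP[k _ ->]; have [kh|hk] := ltnP k h.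
  apply/vars_below_pow/vars_below_cat; last exact: vars_below_const.
  exact/vars_below_scale/vars_below_var.
by move: (a0 k); rewrite hk lt0n negbK => /eqP->; apply: vars_below_const.
Qed.
End VariablesBelow.

Section JacobiTrudi.
Variables mu alpha : seq nat.

(* The hook length h_(i+1,1)(mu): rows are indexed from 0. *)
Definition beta i := nth 0 mu i + (size mu).-1 - i.

Definition row_sum (f : {ffun 'I_(size alpha) -> 'I_(size mu)}) (i : 'I_(size mu)) :=
  \sum_(t | f t == i) nth 0 alpha t.

Definition admissible (s : 'S_(size mu)) (f : {ffun 'I_(size alpha) -> 'I_(size mu)}) :=
  [forall i, ((row_sum f i)%:Z == (nth 0%N mu i)%:Z - (i : nat)%:Z + (s i : nat)%:Z)%R].

Lemma chiE : chi mu alpha =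
  (\sum_(s : 'S_(size mu)) (-1) ^+ odd_perm s * #|[set f | admissible s f]|%:Z)%R.
Proof. by []. Qed.

Lemma admissibleP (s : 'S_(size mu)) f :
  reflect (forall i, row_sum f i + ((size mu).-1 - s i) = beta i) (admissible s f).
Proof.
apply: (iffP forallP) => adm i; have := adm i; rewrite /beta;
  have := ltn_ord i; have := ltn_ord (s i);
  move: (row_sum f i) (nth 0 mu i) (i : nat) (s i : nat) => r b c d sl il;
  [move/eqP | move=> e; apply/eqP]; lia.
Qed.

Lemma row_sum_ge f (t : 'I_(size alpha)) : nth 0 alpha t <= row_sum f (f t).
Proof. by rewrite /row_sum (bigD1 t) //= leq_addr. Qed.

End JacobiTrudi.

Section BetaNumbers.
Variable mu : seq nat.
Hypothesis mu_part : is_partition mu.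
Local Notation l := (size mu).

Lemma nth_part_le i j : i <= j -> nth 0 mu j <= nth 0 mu i.
Proof.
case/andP: mu_part => so _ ij; have [jl|] := ltnP j l; last by move=> lj; rewrite nth_default.
have geq_trans : transitive geq by move=> a b c ba cb; exact: leq_trans cb ba.
by apply: (sorted_leq_nth geq_trans (fun x => leqnn x) 0 so); rewrite ?inE // (leq_ltn_trans ij).
Qed.

Lemma nth_part_gt0 i : i < l -> 0 < nth 0 mu i.
Proof. by case/andP: mu_part => _ /allP mu_gt0 il; apply/mu_gt0/mem_nth. Qed.

Lemma beta_decr i j : i < j -> j < l -> beta mu j < beta mu i.
Proof. by move=> ij jl; have := nth_part_le (ltnW ij); rewrite /beta; lia. Qed.

Lemma beta_inj i j : i < l -> j < l -> beta mu i = beta mu j -> i = j.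
Proof.
move=> il jl eb; have [ij|ji|//] := ltngtP i j.
  by have := beta_decr ij jl; rewrite eb ltnn.
by have := beta_decr ji il; rewrite eb ltnn.
Qed.

Lemma beta_le0 i : beta mu i <= beta mu 0.
Proof. by have := nth_part_le (leq0n i); rewrite /beta; lia. Qed.

Lemma beta0_le_sumn : beta mu 0 <= sumn mu.
Proof.
case/andP: mu_part; case: mu => [|x s] //= _ /andP[_ /allP s_gt0]; rewrite /beta /= subn0.
suff : size s <= sumn s by lia.
elim: s s_gt0 => //= y s IH ys_gt0; have := ys_gt0 y (mem_head _ _).
by have := IH (fun z zs => ys_gt0 z (mem_behead (s := y :: s) zs)); lia.
Qed.

Lemma chi_eq0_large_part alpha x : x \in alpha -> beta mu 0 < x -> chi mu alpha = 0%R.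
Proof.
move=> xa b0x; rewrite chiE big1 // => s _.
suff -> : [set f : {ffun 'I_(size alpha) -> 'I_(size mu)} | admissible s f] = set0.
  by rewrite cards0 GRing.mulr0.
apply/setP => f; rewrite inE in_set0; apply/negP => /admissibleP adm.
have xi : index x alpha < size alpha by rewrite index_mem.
have := row_sum_ge f (Ordinal xi); rewrite /= nth_index //.
have := adm (f (Ordinal xi)); have := beta_le0 (f (Ordinal xi)).
by move: (row_sum _ _) (beta mu _) ((size mu).-1 - _) => r b c; lia.
Qed.

Definition large_beta i := l <= beta mu i.
Definition small_betas := [seq beta mu i | i <- iota 0 l & ~~ large_beta i].
Definition beta_gaps := [seq x <- iota 0 l | x \notin small_betas].
Definition large_rank i := count large_beta (iota 0 i).

(* Matching the large beta numbers, in order, with the gaps left in {0, ..., l-1} by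
   the small ones makes [slot] a bijection from the rows onto {0, ..., l-1}. *)
Definition slot i := if large_beta i then nth 0 beta_gaps (large_rank i) else beta mu i.
Definition cycle_part i := beta mu i - slot i.
Definition cycle_parts := [seq cycle_part i | i <- iota 0 l & large_beta i].

Lemma large_beta0 : 0 < l -> large_beta 0.
Proof. by move=> l_gt0; have := nth_part_gt0 l_gt0; rewrite /large_beta /beta; lia. Qed.

Lemma small_betas_uniq : uniq small_betas.
Proof.
rewrite map_inj_in_uniq ?filter_uniq ?iota_uniq // => i j.
by rewrite !mem_filter !mem_iota /= => /andP[_ il] /andP[_ jl]; apply: beta_inj.
Qed.

Lemma small_betas_lt x : x \in small_betas -> x < l.
Proof. by case/mapP => i; rewrite mem_filter /large_beta ltnNge => /andP[? _] ->. Qed.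

Lemma size_beta_gaps : size beta_gaps = count large_beta (iota 0 l).
Proof.
have small_in : count (mem small_betas) (iota 0 l) = size small_betas.
  rewrite -size_filter; apply/perm_size/uniq_perm; rewrite ?filter_uniq ?iota_uniq ?small_betas_uniq //.
  move=> x; rewrite mem_filter mem_iota /= add0n andb_idr //; exact: small_betas_lt.
have gaps : size beta_gaps = count (predC (mem small_betas)) (iota 0 l) by rewrite size_filter.
have smalls : size small_betas = count (predC large_beta) (iota 0 l) by rewrite size_map size_filter.
have := count_predC (mem small_betas) (iota 0 l); have := count_predC large_beta (iota 0 l).
by rewrite gaps small_in smalls => <-; rewrite addnC => /addIn.
Qed.

Lemma mem_beta_gaps x : x \in beta_gaps -> (x < l) && (x \notin small_betas).
Proof. by rewrite mem_filter mem_iota add0n andbC. Qed.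

Lemma large_rankD i j : i <= j -> large_rank j = large_rank i + count large_beta (iota i (j - i)).
Proof. by move=> ij; rewrite /large_rank -count_cat -iotaD subnKC. Qed.

Lemma large_rank_lt i : i < l -> large_beta i -> large_rank i < size beta_gaps.
Proof.
move=> il bi; rewrite size_beta_gaps -/(large_rank l) (large_rankD (ltnW il)).
by rewrite -(subnSK il) /= bi; lia.
Qed.

Lemma large_rank_mono i j : i < j -> large_beta i -> large_rank i < large_rank j.
Proof. by move=> ij bi; rewrite (large_rankD (ltnW ij)) -(subnSK ij) /= bi; lia. Qed.

Lemma slot_lt i : i < l -> slot i < l.
Proof.
rewrite /slot; case: ifP => [bi il|]; last by move=> /negbT; rewrite /large_beta -ltnNge => ? _.
by have /mem_beta_gaps/andP[] := mem_nth 0 (large_rank_lt il bi).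
Qed.

Lemma slot_le_beta i : i < l -> slot i <= beta mu i.
Proof.
move=> il; have := slot_lt il; rewrite /slot; case: ifP => // bi.
by move=> /ltnW/leq_trans; apply.
Qed.

Lemma cycle_part_slot i : i < l -> cycle_part i + slot i = beta mu i.
Proof. by move=> il; rewrite /cycle_part subnK // slot_le_beta. Qed.

Lemma slot_ltE i j : i < l -> j < l -> large_beta i -> large_beta j -> (slot i < slot j) = (i < j).
Proof.
move=> il jl bi bj; rewrite /slot bi bj.
have lt_slot a b : a < b -> b < l -> large_beta a -> large_beta b ->
    nth 0 beta_gaps (large_rank a) < nth 0 beta_gaps (large_rank b).
  move=> ab bl ba bb; apply: (sorted_ltn_nth ltn_trans 0);
    rewrite ?inE ?large_rank_lt ?large_rank_mono //.
    by apply: sorted_filter; [exact: ltn_trans | exact: iota_ltn_sorted].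
  exact: ltn_trans bl.
have [ij|ji|->] := ltngtP i j; [exact: lt_slot | | exact: ltnn].
by apply/negbTE; rewrite -leqNgt ltnW // lt_slot.
Qed.

Lemma slot_inj i j : i < l -> j < l -> slot i = slot j -> i = j.
Proof.
move=> il jl; rewrite /slot.
have gap_not_small k r : k < l -> ~~ large_beta k -> large_beta r -> r < l -> 
    nth 0 beta_gaps (large_rank r) != beta mu k.
  move=> kl bk br rl; have /mem_beta_gaps/andP[_] := mem_nth 0 (large_rank_lt rl br).
  by apply: contraNneq => ->; apply/mapP; exists k; rewrite // mem_filter mem_iota bk.
case bi: (large_beta i); case bj: (large_beta j) => e; last exact: beta_inj.
- have [ij|ji|//] := ltngtP i j.
    by have := slot_ltE il jl bi bj; rewrite /slot bi bj e ltnn ij.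
  by have := slot_ltE jl il bj bi; rewrite /slot bi bj e ltnn ji.
- by move: (gap_not_small j i jl (negbT bj) bi il); rewrite e eqxx.
- by move: (gap_not_small i j il (negbT bi) bj jl); rewrite e eqxx.
Qed.

Lemma slot0 : 0 < l -> slot 0 = 0.
Proof.
move=> l_gt0; rewrite /slot large_beta0 // /large_rank /= /beta_gaps -(prednK l_gt0) /=.
case: ifP => // /negbFE /mapP[i]; rewrite mem_filter mem_iota => /andP[_ il].
by have := nth_part_gt0 il; rewrite /beta; lia.
Qed.

Lemma cycle_part_inj i j : i < l -> j < l -> large_beta i -> large_beta j ->
  cycle_part i = cycle_part j -> i = j.
Proof.
have lt_part a b : a < b -> a < l -> b < l -> large_beta a -> large_beta b ->
    cycle_part b < cycle_part a.
  move=> ab al bl ba bb; have := beta_decr ab bl; have := slot_ltE al bl ba bb.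
  by rewrite ab -(cycle_part_slot al) -(cycle_part_slot bl); lia.
move=> il jl bi bj e; have [ij|ji|//] := ltngtP i j.
  by have := lt_part _ _ ij il jl bi bj; rewrite e ltnn.
by have := lt_part _ _ ji jl il bj bi; rewrite e ltnn.
Qed.

Lemma cycle_part_gt0 i : i < l -> large_beta i -> 0 < cycle_part i.
Proof. by move=> il; have := slot_lt il; rewrite /cycle_part /large_beta; lia. Qed.

Lemma cycle_part_small i : ~~ large_beta i -> cycle_part i = 0.
Proof. by move=> /negbTE bi; rewrite /cycle_part /slot bi subnn. Qed.

Lemma cycle_parts_uniq : uniq cycle_parts.
Proof.
rewrite map_inj_in_uniq ?filter_uniq ?iota_uniq // => i j.
by rewrite !mem_filter !mem_iota /= => /andP[bi il] /andP[bj jl]; apply: cycle_part_inj.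
Qed.

Lemma cycle_part_le_sumn x : x \in cycle_parts -> 0 < x <= sumn mu.
Proof.
case/mapP => i; rewrite mem_filter mem_iota /= => /andP[bi il] ->.
rewrite cycle_part_gt0 //= (leq_trans _ beta0_le_sumn) // (leq_trans _ (beta_le0 i)) //.
exact: leq_subr.
Qed.

Definition slot_ord (i : 'I_l) : 'I_l := Ordinal (slot_lt (ltn_ord i)).

Lemma slot_ord_inj : injective slot_ord.
Proof. by move=> i j /(congr1 val) /slot_inj eq_ij; apply/val_inj/eq_ij. Qed.

Definition special_perm : 'S_l := perm (inj_comp (@rev_ord_inj l) slot_ord_inj).

Lemma special_permE i : l.-1 - special_perm i = slot i.
Proof. by rewrite permE /=; have := slot_lt (ltn_ord i); lia. Qed.

Lemma sum_cycle_part : \sum_(i < l) cycle_part i = sumn mu.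
Proof.
have : \sum_(i < l) (cycle_part i + (l.-1 - special_perm i)) = \sum_(i < l) (nth 0 mu i + (l.-1 - i)).
  apply: eq_bigr => i _; rewrite special_permE cycle_part_slot //.
  by rewrite /beta; have := ltn_ord i; lia.
rewrite !big_split /=.
have -> : \sum_(i < l) (l.-1 - special_perm i) = \sum_(i < l) (l.-1 - i).
  by rewrite [RHS](reindex_inj (@perm_inj _ special_perm)).
move=> /addIn->.
by rewrite sumnE (big_nth 0) big_mkord.
Qed.

Definition special_ct : {ffun 'I_(sumn mu) -> 'I_(sumn mu).+1} :=
  [ffun k : 'I_(sumn mu) => inord (k.+1 \in cycle_parts)].

Definition special_parts := ct_parts special_ct.

Lemma special_ctE k : special_ct k = (k.+1 \in cycle_parts) :> nat.
Proof. by rewrite ffunE inordK // ltnS (leq_trans (leq_b1 _)) // (leq_ltn_trans _ (ltn_ord k)). Qed.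

Lemma special_partsE :
  special_parts = [seq k.+1 | k : 'I_(sumn mu) <- enum 'I_(sumn mu) & k.+1 \in cycle_parts].
Proof. exact: ct_parts_bool special_ctE. Qed.

Lemma special_parts_uniq : uniq special_parts.
Proof.
rewrite special_partsE map_inj_in_uniq; first exact/filter_uniq/enum_uniq.
by move=> i j _ _ [] /val_inj.
Qed.

Lemma mem_special_parts x : (x \in special_parts) = (x \in cycle_parts).
Proof.
rewrite special_partsE; apply/mapP/idP => [[k]|xC]; first by rewrite mem_filter => /andP[? _] ->.
have /andP[x_gt0 x_le] := cycle_part_le_sumn xC.
have xm : x.-1 < sumn mu by lia.
exists (Ordinal xm); last by rewrite /= prednK.
by rewrite mem_filter /= prednK // xC mem_enum.
Qed.

Lemma special_ct_cycle_type : cycle_type special_ct.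
Proof.
apply/eqP; transitivity (sumn special_parts).
  rewrite special_partsE [RHS]sumnE big_map big_filter big_enum_cond /= [RHS]big_mkcond /=.
  by apply: eq_bigr => k _; rewrite special_ctE; case: (_ \in _); rewrite ?muln1 ?muln0.
rewrite (perm_sumn (uniq_perm special_parts_uniq cycle_parts_uniq mem_special_parts)).
rewrite -sum_cycle_part sumnE big_map big_filter big_mkcond -(big_mkord xpredT) /index_iota subn0.
by apply: eq_bigr => i _; case: ifP => // /negbT /cycle_part_small ->.
Qed.

Lemma card_large_rows : #|[set i : 'I_l | large_beta i]| = size special_parts.
Proof.
rewrite (perm_size (uniq_perm special_parts_uniq cycle_parts_uniq mem_special_parts)).
rewrite size_map size_filter -sum1_count -sum1_card.
have -> : iota 0 l = index_iota 0 l by rewrite /index_iota subn0.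
by rewrite big_mkord; apply: eq_bigl => i; rewrite inE.
Qed.

Section AdmissiblePair.
Variables (s : 'S_l) (f : {ffun 'I_(size special_parts) -> 'I_l}).
Hypothesis adm : admissible s f.

Let adm_row i : row_sum f i + (l.-1 - s i) = beta mu i := (admissibleP s f adm) i.

Lemma large_row_hit (i : 'I_l) : large_beta i -> exists u, f u = i.
Proof.
move=> bi; have [u /eqP fu|no_u] := pickP (fun u => f u == i); first by exists u.
have := adm_row i; rewrite /row_sum big_pred0 // add0n.
by move: bi; rewrite /large_beta; have := ltn_ord (s i); lia.
Qed.

Lemma admissible_image : f @: 'I_(size special_parts) = [set i : 'I_l | large_beta i].
Proof.
apply/esym/eqP; rewrite eqEcard; apply/andP; split.
  by apply/subsetP => i; rewrite inE => /large_row_hit[u <-]; apply: imset_f.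
by rewrite card_large_rows -[X in _ <= X](card_ord (size special_parts)) leq_imset_card.
Qed.

Lemma admissible_inj : injective f.
Proof.
have := card_large_rows; rewrite -admissible_image -[X in _ = X]card_ord.
by move=> /eqP/imset_injP f_inj u v; apply: f_inj.
Qed.

Lemma admissible_large u : large_beta (f u).
Proof.
have : f u \in f @: 'I_(size special_parts) by apply: imset_f.
by rewrite admissible_image inE.
Qed.

Lemma row_sum_hit u : row_sum f (f u) = nth 0 special_parts u.
Proof. by rewrite /row_sum (big_pred1 u) // => v /=; apply/eqP/eqP => [/admissible_inj|->]. Qed.

Lemma row_sum_small (i : 'I_l) : ~~ large_beta i -> row_sum f i = 0.
Proof.
move=> bi; rewrite /row_sum big_pred0 // => u; apply: contraNF bi => /eqP <-.
exact: admissible_large.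
Qed.

Lemma slot_surj (v : 'I_l) : exists q : 'I_l, slot q = v.
Proof.
exists ((perm slot_ord_inj)^-1 v)%g.
by have := permKV (perm slot_ord_inj) v; rewrite permE => /(congr1 val).
Qed.

Lemma rev_perm_inj i j : l.-1 - s i = l.-1 - s j -> i = j.
Proof.
move=> e; apply/(@perm_inj _ s)/ord_inj.
by move: e; have := ltn_ord (s i); have := ltn_ord (s j); move: (s i : nat) (s j : nat) => a b; lia.
Qed.

(* Rows are filled in increasing order: the row [r] receiving the part [cycle_part t]
   can lie neither above [t] (the part would be counted twice) nor below it (the
   slot l - 1 - s r would then be smaller than [slot t], and no row can own it). *)
Lemma admissible_row_sum_large (t : 'I_l) : large_beta t -> row_sum f t = cycle_part t.
Proof.
suff IH n : forall t' : 'I_l, t' < n -> large_beta t' -> row_sum f t' = cycle_part t'.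
  exact: IH t.+1 t (ltnSn t).
elim: n {t} => // n IH t tn bt.
have : cycle_part t \in special_parts.
  by rewrite mem_special_parts map_f // mem_filter mem_iota bt /=.
rewrite -index_mem => tu; set r := f (Ordinal tu).
have r_t : row_sum f r = cycle_part t by rewrite row_sum_hit nth_index // -index_mem.
have br : large_beta r := admissible_large _.
have [rt|tr|/val_inj eq_rt] := ltngtP r t; last by rewrite -{1}eq_rt.
  move: (IH r (leq_trans rt tn) br); rewrite r_t => eq_rt.
  by move: rt; rewrite -(cycle_part_inj (ltn_ord t) (ltn_ord r) bt br eq_rt) ltnn.
have [q] := slot_surj (rev_ord (s r)); rewrite /= => slot_q.
have {}slot_q : slot q = l.-1 - s r by rewrite slot_q; have := ltn_ord (s r); lia.
have lt_qt : large_beta q -> q < t.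
  move=> bq; rewrite -(slot_ltE (ltn_ord q) (ltn_ord t) bq bt) slot_q.
  have := adm_row r; rewrite r_t; have := cycle_part_slot (ltn_ord t).
  have := beta_decr tr (ltn_ord r); lia.
have qr : q = r.
  apply: rev_perm_inj; rewrite -slot_q; have := adm_row q.
  case bq: (large_beta q).
    by rewrite (IH q (leq_trans (lt_qt bq) tn) bq) -(cycle_part_slot (ltn_ord q)) => /addnI.
  by rewrite row_sum_small ?bq // add0n /slot bq.
by move: lt_qt; rewrite qr => /(_ br)/(ltn_trans tr); rewrite ltnn.
Qed.

Lemma admissible_row_sum (i : 'I_l) : row_sum f i = cycle_part i.
Proof.
have [bi|bi] := boolP (large_beta i); first exact: admissible_row_sum_large.
by rewrite row_sum_small // cycle_part_small.
Qed.

Lemma admissible_perm : s = special_perm.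
Proof.
apply/permP => i; apply/ord_inj; have := adm_row i.
rewrite admissible_row_sum -(cycle_part_slot (ltn_ord i)) -special_permE => /addnI.
have := ltn_ord (s i); have := ltn_ord (special_perm i).
by move: (s i : nat) (special_perm i : nat) => a b; lia.
Qed.
End AdmissiblePair.

Section SpecialAssignment.
Hypothesis l_gt0 : 0 < l.

Definition special_assign : {ffun 'I_(size special_parts) -> 'I_l} :=
  [ffun u : 'I_(size special_parts) => odflt (Ordinal l_gt0)
     [pick i : 'I_l | large_beta i && (cycle_part i == nth 0 special_parts u)]].

Lemma special_assignP u :
  large_beta (special_assign u) /\ cycle_part (special_assign u) = nth 0 special_parts u.
Proof.
rewrite ffunE; case: pickP => [i /andP[bi /eqP ci] | no_row] //=.
have : nth 0 special_parts u \in cycle_parts by rewrite -mem_special_parts mem_nth.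
case/mapP => j; rewrite mem_filter mem_iota /= => /andP[bj jl] e.
by have := no_row (Ordinal jl); rewrite /= bj e eqxx.
Qed.

Lemma row_sum_special_assign (i : 'I_l) : row_sum special_assign i = cycle_part i.
Proof.
have [bi|bi] := boolP (large_beta i); last first.
  rewrite cycle_part_small // /row_sum big_pred0 // => u; apply: contraNF bi => /eqP <-.
  by case: (special_assignP u).
have : cycle_part i \in special_parts by rewrite mem_special_parts map_f // mem_filter mem_iota bi /=.
rewrite -index_mem => iu; rewrite /row_sum (big_pred1 (Ordinal iu)) /= ?nth_index -?index_mem // => u /=.
have [bu cu] := special_assignP u; apply/eqP/eqP => [e|e].
  apply/val_inj/eqP => /=; rewrite -(nth_uniq 0 (ltn_ord u) iu special_parts_uniq).
  by rewrite nth_index -?index_mem // -cu e.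
apply/val_inj/(cycle_part_inj (ltn_ord _) (ltn_ord _) bu bi).
by rewrite cu e /= nth_index // -index_mem.
Qed.

Lemma special_admissible : admissible special_perm special_assign.
Proof. by apply/admissibleP => i; rewrite row_sum_special_assign special_permE cycle_part_slot. Qed.

Lemma chi_special_neq0 : chi mu special_parts != 0%R.
Proof.
rewrite chiE (bigD1 special_perm) //= big1 ?GRing.addr0 => [|s ns].
  rewrite GRing.mulf_neq0 ?signr_eq0 // eqz_nat -lt0n.
  by apply/card_gt0P; exists special_assign; rewrite inE special_admissible.
suff -> : [set f : {ffun 'I_(size special_parts) -> 'I_l} | admissible s f] = set0.
  by rewrite cards0 GRing.mulr0.
apply/setP => f; rewrite inE in_set0; apply/negP => /admissible_perm s_eq.
by rewrite s_eq eqxx in ns.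
Qed.
End SpecialAssignment.
End BetaNumbers.

Definition chi_weight mu (a : {ffun 'I_(sumn mu) -> 'I_(sumn mu).+1}) : rat :=
  ((chi mu (ct_parts a))%:~R / (zee a)%:R)%R.
Arguments chi_weight : clear implicits.

Lemma charpolyE mu : charpoly mu = falling (ct_combination (chi_weight mu)).
Proof. by []. Qed.

Lemma charpoly_max_var mu : is_partition mu -> 0 < size mu ->
  occurs (charpoly mu) (beta mu 0) /\
  (forall j, occurs (charpoly mu) j -> j <= beta mu 0).
Proof.
move=> mu_part l_gt0; have b0_le := beta0_le_sumn mu_part.
have l_le_b0 : size mu <= beta mu 0 := large_beta0 mu_part l_gt0.
split => [|j]; last first.
  apply: occurs_vars_below; rewrite charpolyE.
  apply/vars_below_falling/vars_below_ct_combination => a cta k hk ak.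
  by rewrite /chi_weight (chi_eq0_large_part mu_part (mem_ct_parts ak)) ?GRing.mul0r //; lia.
have b0m : (beta mu 0).-1 < sumn mu by lia.
exists (ct_expo (special_ct mu)), (Ordinal b0m); split => /=; first by lia.
  rewrite ffunE special_ctE lt0b prednK ?(leq_trans l_gt0) //.
  have <- : cycle_part mu 0 = beta mu 0 by rewrite /cycle_part slot0 ?subn0.
  by rewrite map_f // mem_filter mem_iota large_beta0.
rewrite charpolyE coef_falling_ct_combination ?special_ct_cycle_type //.
rewrite GRing.mulf_neq0 ?GRing.mulf_neq0 ?GRing.invr_eq0 ?intr_eq0 ?chi_special_neq0 //.
  by rewrite pnatr_eq0 -lt0n prodn_gt0 // => k; rewrite muln_gt0 fact_gt0 expn_gt0.
by rewrite prodf_seq_neq0; apply/allP => k _; rewrite expf_neq0 // pnatr_eq0.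
Qed.

Lemma behead_partition la : is_partition la -> is_partition (behead la).
Proof. by case: la => //= x s /andP[/path_sorted so /andP[_ s_gt0]]; apply/andP. Qed.

Lemma hook21E la : is_partition la -> 0 < hook la 2 1 ->
  0 < size (behead la) /\ hook la 2 1 = beta (behead la) 0.
Proof.
case: la => [|x [|y s]] //= la_part; rewrite /hook /part /=; case: ifP => // y_gt0 _.
have : count (fun a => 0 < a) [:: x, y & s] = (size s).+2.
  by apply/eqP; rewrite -all_count; case/andP: la_part.
rewrite /conj_part /beta /= => ->; split => //; move: (size s) => k. lia.
Qed.

Lemma behead_conj_partitionE x s :
  behead (conj_partition (x :: s)) = [seq conj_part (x :: s) j.+1 | j <- iota 1 x.-1].
Proof. by rewrite /conj_partition /mkseq /=; case: x. Qed.

Lemma hook12E la : is_partition la -> 0 < hook la 1 2 ->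
  [/\ is_partition (behead (conj_partition la)), 0 < size (behead (conj_partition la))
    & hook la 1 2 = beta (behead (conj_partition la)) 0].
Proof.
case: la => [|x s] // la_part; rewrite /hook /part /=; case: ifP => // x_ge2 _.
rewrite behead_conj_partitionE size_map size_iota.
have conj_gt0 i : i <= x -> 0 < conj_part (x :: s) i by rewrite /conj_part /= => ->.
split.
- apply/andP; split.
    apply: homo_sorted (iota_sorted 1 x.-1) => i j ij; rewrite /conj_part /= leq_add //.
      by case jx: (j < x); rewrite //= (leq_ltn_trans ij jx).
    by apply: sub_count => a /=; apply: leq_trans.
  by apply/allP => c /mapP[i]; rewrite mem_iota => /andP[i_ge1 ix] ->; apply: conj_gt0; lia.
- lia.
- rewrite /beta size_map size_iota (nth_map 0) ?size_iota ?nth_iota /=; try lia.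
  by rewrite addn0 x_ge2; move: (conj_part s 2) => c; lia.
Qed.

Theorem corollary3p2 (n : nat) (la : seq nat) :
  is_partition la -> sumn la = n ->
  ((0 < hook la 2 1)%N ->
     occurs (charpoly (behead la)) (hook la 2 1) /\
     (forall j, occurs (charpoly (behead la)) j -> (j <= hook la 2 1)%N)) /\
  ((0 < hook la 1 2)%N ->
     occurs (charpoly (behead (conj_partition la))) (hook la 1 2) /\
     (forall j, occurs (charpoly (behead (conj_partition la))) j -> (j <= hook la 1 2)%N)).
Proof.
move=> la_part _; split => hook_gt0.
  have [l_gt0 ->] := hook21E la_part hook_gt0.
  exact: charpoly_max_var (behead_partition la_part) l_gt0.
have [conj_part l_gt0 ->] := hook12E la_part hook_gt0.
exact: charpoly_max_var conj_part l_gt0.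
Qed.
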